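(* Let $k \ge 2$ and $n \ge 1$ be natural numbers, and let $h_k(x) = x + \left\lfloor \frac{x}{k-1} \right\rfloor + 1$ for non-negative integers $x$, with $h_k^p$ denoting the $p$-th functional iterate of $h_k$ (so $h_k^0(0)=0$). Then there exists $p \in \mathbb{N}$ with $h_k^{p-1}(0) < n(k-1) \le h_k^{p}(0)$, and for this $p$ the last number remaining in the Josephus problem with the numbers $1,2,\dots,n$ in which every $k$-th number is removed is $nk - h_k^{p}(0)$.
   Context: Josephus problem: the numbers $1,2,\dots,n$ are arranged in a circle; starting the count at $1$ and proceeding around the circle, every $k$-th number still present is removed (after a removal, counting resumes with the next remaining number), until exactly one number remains. The claim asks to identify this remaining number. *)

From mathcomp Require Import all_boot.
Set Implicit Arguments. Unset Strict Implicit. Unset Printing Implicit Defensive.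

Definition hk (k x : nat) : nat := x + x %/ (k - 1) + 1.

(* One step of the Josephus process on the current circle [s] (listed in
   circular order), where counting starts at position [i] of [s]:
   the k-th element counted, at position j = (i + k - 1) mod |s|, is removed,
   and counting resumes at the element following it, which in the new list
   sits at position j (or 0 if the removed element was the last one). *)
Fixpoint jos_run (fuel k : nat) (s : seq nat) (i : nat) : seq nat :=
  match fuel with
  | 0 => s
  | f.+1 =>
      if size s <= 1 then s
      else let j := (i + k.-1) %% size s in
           jos_run f k (take j s ++ drop j.+1 s) (j %% (size s).-1)
  end.

(* The last number remaining when 1..n are placed in a circle, counting
   starts at 1 and every k-th remaining number is removed.
   n removal steps of fuel suffice (n-1 removals are needed). *)
Definition josephus (n k : nat) : nat :=
  head 0 (jos_run n k (iota 1 n) 0).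

(* Write J(m) for the 0-based position of the survivor among m numbers when
   counting starts at position 0.  Removing the k-th number and restarting
   right after it reduces m numbers to m - 1 numbers rotated by k, whence the
   classical recurrence J(m+1) = (J(m) + k) mod (m+1).

   For the closed form, let x(n) be the first iterate of h_k from 0 that is
   at least n(k-1); the claim is x(n) = nk - 1 - J(n).  Passing from n to
   n+1, either x(n) already reaches (n+1)(k-1) and J(n+1) = J(n) + k, or the
   iterates keep running through the band [n(k-1), (n+1)(k-1)), on which h_k
   adds exactly n+1; they leave it below (n+1)k, having added a multiple of
   n+1, which is absorbed by the reduction mod n+1. *)

From mathcomp Require Import all_boot zify.

Set Implicit Arguments.
Unset Strict Implicit.
Unset Printing Implicit Defensive.

Fixpoint josephus_pos (k m : nat) : nat :=
  if m is m'.+1 then (josephus_pos k m' + k) %% m'.+1 else 0.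

Lemma josephus_pos_lt k m : 0 < m -> josephus_pos k m < m.
Proof. by case: m => // m _; rewrite ltn_pmod. Qed.

Lemma nth_drop_at (T : Type) (x0 : T) (s : seq T) j a :
    j < size s -> a < (size s).-1 ->
  nth x0 (take j s ++ drop j.+1 s) ((j + a) %% (size s).-1)
  = nth x0 s ((j + a).+1 %% size s).
Proof.
move=> ltjs ltam; rewrite nth_cat size_take ltjs.
case: (ltnP (j + a) (size s).-1) => hja.
- rewrite modn_small // ltnNge leq_addr /= nth_drop modn_small; last by lia.
  by congr nth; lia.
- have -> : (j + a) %% (size s).-1 = j + a - (size s).-1.
    by rewrite -[in LHS](subnK hja) modnDr modn_small //; lia.
  have -> : (j + a).+1 %% size s = j + a - (size s).-1.
    have -> : (j + a).+1 = j + a - (size s).-1 + size s by lia.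
    by rewrite modnDr modn_small //; lia.
  by rewrite ifT ?nth_take //; lia.
Qed.

Lemma jos_run_single k f (s : seq nat) i :
    0 < k -> 0 < size s <= f.+1 ->
  jos_run f k s i = [:: nth 0 s ((i + josephus_pos k (size s)) %% size s)].
Proof.
move=> k_gt0; elim: f s i => [|f IHf] s i /andP[s_gt0 s_le].
  by case: s s_gt0 s_le => [|x [|]] //= _ _; rewrite modn1.
rewrite /=; case: ifP => [s_le1|s_gt1].
  by case: s s_gt0 s_le1 {s_le} => [|x [|]] //= _ _; rewrite modn1.
set m := size s in s_gt1 *; set j := (i + k.-1) %% m.
have ltjm : j < m by rewrite ltn_pmod.
have size_rem : size (take j s ++ drop j.+1 s) = m.-1.
  by rewrite size_cat size_take size_drop ltjm; lia.
rewrite IHf size_rem; last by lia.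
have [m' def_m] : exists m', m = m'.+2 by exists (m - 2); lia.
have a_lt : josephus_pos k m.-1 < m.-1 by rewrite josephus_pos_lt // def_m.
rewrite modnDml nth_drop_at //.
congr [:: nth _ _ _].
have -> : josephus_pos k m = (josephus_pos k m.-1 + k) %% m by rewrite def_m.
rewrite -/m modnDmr /j -addn1 -!addnA modnDml.
by congr (_ %% _); lia.
Qed.

Lemma josephus_E n k : 0 < k -> 0 < n -> josephus n k = (josephus_pos k n).+1.
Proof.
move=> k_gt0 n_gt0; rewrite /josephus jos_run_single ?size_iota ?n_gt0 //=.
by rewrite add0n modn_small ?josephus_pos_lt // nth_iota ?josephus_pos_lt.
Qed.

Definition first_reach (u : nat -> nat) (N p : nat) : Prop :=
  0 < p /\ u p.-1 < N <= u p.

Lemma first_reach_uniq u N p q :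
  {homo u : i j / i <= j} -> first_reach u N p -> first_reach u N q -> p = q.
Proof.
move=> u_homo [p_gt0 /andP[lt_p le_p]] [q_gt0 /andP[lt_q le_q]].
case: (ltngtP p q) => // [ltpq|ltqp].
- by have := u_homo p q.-1 ltac:(lia); lia.
- by have := u_homo q p.-1 ltac:(lia); lia.
Qed.

Lemma iter_exit_band (f : nat -> nat) a b c y : 0 < c ->
    (forall z, a <= z < b -> f z = z + c) -> a <= y < b ->
  exists2 q, 0 < q &
    [/\ iter q.-1 f y < b <= iter q f y, iter q f y < b + c
      & iter q f y = y + q * c].
Proof.
move=> c_gt0 f_band; move: {2}(b - y) (leqnn (b - y)) => d.
elim: d y => [|d IHd] y le_d /andP[le_ay lt_yb]; first by lia.
have fyE : f y = y + c by rewrite f_band ?le_ay.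
case: (leqP b (f y)) => [le_b_fy|lt_fy_b].
  by exists 1 => //=; split; lia.
have fy_band : a <= f y < b by apply/andP; lia.
have [q q_gt0 [/andP[lt_q le_q] lt_qc iter_qE]] := IHd (f y) ltac:(lia) fy_band.
exists q.+1 => //; rewrite succnK iterSr -[X in iter X f y](prednK q_gt0) iterSr.
by split; lia.
Qed.

Lemma hk_gt k x : x < hk k x.
Proof. by rewrite /hk addn1 ltnS leq_addr. Qed.

Lemma homo_iter_hk k : {homo (fun p => iter p (hk k) 0) : i j / i <= j}.
Proof.
by apply: homo_leq => [//|y x z|i]; [exact: leq_trans | exact: ltnW (hk_gt _ _)].
Qed.

Lemma iter_hk_small k i : i <= k - 1 -> iter i (hk k) 0 = i.
Proof.
elim: i => [//|i IHi] le_ik /=; rewrite IHi; last by lia.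
by rewrite /hk divn_small; lia.
Qed.

Lemma hk_band k n y : n * (k - 1) <= y < n.+1 * (k - 1) -> hk k y = y + n.+1.
Proof.
move=> /andP[le_y lt_y]; rewrite /hk.
have -> : y = n * (k - 1) + (y - n * (k - 1)) by lia.
by rewrite divnMDl ?(divn_small (m := y - _)); lia.
Qed.

Lemma first_reach_hk_josephus_pos k n : 2 <= k -> 0 < n ->
  exists p, first_reach (fun p => iter p (hk k) 0) (n * (k - 1)) p
            /\ iter p (hk k) 0 + josephus_pos k n + 1 = n * k.
Proof.
move=> k_ge2; elim: n => [//|n IHn] _.
case: (posnP n) => [->|n_gt0].
  by exists (k - 1); rewrite /first_reach !iter_hk_small /= ?modn1; lia.
have [p [[p_gt0 /andP[lt_p le_p]] eq_p]] := IHn n_gt0.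
have J_lt := josephus_pos_lt k n_gt0.
set x := iter p (hk k) 0 in le_p eq_p.
case: (leqP (n.+1 * (k - 1)) x) => [le_x|lt_x].
  exists p; split; first by split=> //; apply/andP; split; lia.
  by rewrite /= modn_small; lia.
have x_band : n * (k - 1) <= x < n.+1 * (k - 1) by apply/andP.
have [q q_gt0 [/andP[lt_q le_q] lt_qc iter_qE]] :=
  iter_exit_band (ltn0Sn n) (@hk_band k n) x_band.
have lastE : iter (q + p) (hk k) 0 = iter q (hk k) x by rewrite iterD.
have prevE : iter (q + p).-1 (hk k) 0 = iter q.-1 (hk k) x.
  by rewrite -[q in q + p](prednK q_gt0) addSn /= iterD.
exists (q + p); rewrite /first_reach lastE prevE lt_q le_q; split; first by lia.
set y := iter q (hk k) x in le_q lt_qc iter_qE *.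
have -> : josephus_pos k n.+1 = (q * n.+1 + (n.+1 * k - y - 1)) %% n.+1.
  by rewrite /=; congr (_ %% _); lia.
by rewrite modnMDl modn_small; lia.
Qed.

Theorem theorem3 (k n : nat) (hk2 : 2 <= k) (hn : 1 <= n) :
  (exists p : nat,
      0 < p /\ iter p.-1 (hk k) 0 < n * (k - 1) <= iter p (hk k) 0) /\
  (forall p : nat,
      0 < p -> iter p.-1 (hk k) 0 < n * (k - 1) <= iter p (hk k) 0 ->
      josephus n k = n * k - iter p (hk k) 0).
Proof.
have [p [reach_p eq_p]] := first_reach_hk_josephus_pos hk2 hn.
split; first by exists p.
move=> q q_gt0 reach_q.
have -> : q = p := first_reach_uniq (@homo_iter_hk k) (conj q_gt0 reach_q) reach_p.
by rewrite josephus_E //; lia.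
Qed.
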